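(* The intersection of all members' viability kernels is not necessarily a viable set for all members. Precisely: there exist $N\ge 2$, a closed constraint set $K\subset\mathbb R^n$, an admissible control set $U$ and continuous-time dynamics $x'=f_i(x,u)$, $u\in U$, $i=1,\dots,N$, such that the intersection $H=\bigcap_{i=1}^N \mathrm{Viab}_i(K)$ is nonempty but $H$ is not a viable set for some member $i$'s system.
   Context: $\mathrm{Viab}_i(K)$ denotes the viability kernel of $K$ for member $i$'s system $x'(t)=f_i(x(t),u(t))$, $u(t)\in U(x(t))$: the set of all $x\in K$ from which there exists an evolution of the system starting at $x$ whose trajectory remains in $K$ for all $t\ge0$. A set $H$ is viable for a system if from every $x\in H$ there exists an evolution of that system starting at $x$ remaining in $H$ for all $t\ge0$. *)

From HB Require Import structures.
From mathcomp Require Import all_boot all_order all_algebra.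
From mathcomp Require Import all_classical all_reals all_analysis.
Set Implicit Arguments. Unset Strict Implicit. Unset Printing Implicit Defensive.
Import Order.TTheory GRing.Theory Num.Theory.
Import numFieldNormedType.Exports.
Local Open Scope classical_set_scope.
Local Open Scope ring_scope.

Section Viability.
Variables (R : realType) (n m : nat).
Notation X := 'rV[R]_n.
Notation Uc := 'rV[R]_m.

Definition evolution (f : X -> Uc -> X) (U : X -> set Uc) (x0 : X)
  (x : R -> X) : Prop :=
  x 0 = x0 /\
  exists u : R -> Uc, forall t : R, 0 <= t ->
    U (x t) (u t) /\ is_derive t 1 x (f (x t) (u t)).

Definition viab (f : X -> Uc -> X) (U : X -> set Uc) (K : set X) : set X :=
  [set x0 | K x0 /\ exists x, evolution f U x0 x /\
                       forall t : R, 0 <= t -> K (x t)].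

Definition viable (f : X -> Uc -> X) (U : X -> set Uc) (H : set X) : Prop :=
  forall x0, H x0 -> exists x, evolution f U x0 x /\
                       forall t : R, 0 <= t -> H (x t).
End Viability.

(* Let K be the plane minus the open quadrant (0, +oo) x (1, +oo) and let
   member i move with constant velocity e_i, whatever the control.  Then
   Viab_0(K) = {y <= 1} and Viab_1(K) = {x <= 0}, so the origin lies in their
   intersection H.  But member 1 can only move up, so its evolution from the
   origin reaches (0, 2), which is in K but not in H: from there member 0 is
   pushed into the forbidden quadrant. *)
From HB Require Import structures.
From mathcomp Require Import all_boot all_order all_algebra.
From mathcomp Require Import all_classical all_reals all_analysis.
Import Order.TTheory GRing.Theory Num.Theory.
Import numFieldNormedType.Exports.
Local Open Scope classical_set_scope.
Local Open Scope ring_scope.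

Section constant_velocity.
Context {R : realType} {n : nat}.
Implicit Types (x : R -> 'rV[R]_n) (p v : 'rV[R]_n) (s t : R).

Lemma is_derive_coord x t v j :
  is_derive t (1 : R) x v -> is_derive t (1 : R) (fun s => x s ord0 j) (v ord0 j).
Proof.
move=> [dx <-]; apply: DeriveDef.
  exact: (derivable_mxP x t 1).1 dx ord0 j.
by rewrite derive_mx // mxE.
Qed.

Lemma is_derive_line p v t : is_derive t (1 : R) (fun s => p + s *: v) v.
Proof.
have dscale : is_derive t (1 : R) (fun s => s *: v) v.
  apply: DeriveDef; first exact/derivable1_diffP/ex_diff.
  by rewrite deriveE ?diff_val ?scale1r //; exact: ex_diff.
by have := is_deriveD (is_derive_cst p t 1) dscale; rewrite add0r.
Qed.

Lemma constant_velocity_line x v :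
  (forall t, 0 <= t -> is_derive t (1 : R) x v) ->
  forall t, 0 <= t -> x t = x 0 + t *: v.
Proof.
move=> dx t t_ge0; apply/rowP => j; rewrite !mxE.
have dxj s : 0 <= s -> is_derive s (1 : R) (fun r => x r ord0 j) (v ord0 j).
  by move=> s_ge0; apply: is_derive_coord; exact: dx.
have dxj_in s : s \in `]0, t[ -> is_derive s (1 : R) (fun r => x r ord0 j) (v ord0 j).
  by rewrite in_itv /= => /andP[s_gt0 _]; exact/dxj/ltW.
have cxj : {within `[0, t], continuous (fun r => x r ord0 j)}.
  apply: continuous_in_subspaceT => s /set_mem; rewrite /= in_itv /= => /andP[s_ge0 _].
  apply/differentiable_continuous/derivable1_diffP.
  by have [] := dxj s s_ge0.
have [c _ /eqP] := MVT_segment t_ge0 dxj_in cxj.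
by rewrite subr0 subr_eq => /eqP ->; rewrite addrC mulrC.
Qed.

End constant_velocity.

Section constant_dynamics.
Context {R : realType} {n m : nat} {U : 'rV[R]_n -> set 'rV[R]_m} {v : 'rV[R]_n}.
Implicit Types (p : 'rV[R]_n) (K H : set 'rV[R]_n).

Lemma evolution_cst_line {p x} :
  evolution (fun _ _ => v) U p x -> forall t, 0 <= t -> x t = p + t *: v.
Proof.
move=> [<- [u evx]]; apply: constant_velocity_line => t t_ge0.
by have [] := evx t t_ge0.
Qed.

Lemma viable_cst_ray {H p} :
  viable (fun _ _ => v) U H -> H p -> forall t, 0 <= t -> H (p + t *: v).
Proof.
move=> vH Hp t t_ge0; have [x [evx Hx]] := vH p Hp.
by rewrite -(evolution_cst_line evx _ t_ge0); exact: Hx.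
Qed.

Hypothesis U_neq0 : forall y, U y !=set0.

Lemma evolution_cst p : evolution (fun _ _ => v) U p (fun t => p + t *: v).
Proof.
split; first by rewrite scale0r addr0.
exists (fun t => projT1 (cid (U_neq0 (p + t *: v)))) => t _.
by split; [exact: projT2 (cid _) | exact: is_derive_line].
Qed.

Lemma viab_cstE K p :
  viab (fun _ _ => v) U K p <-> forall t, 0 <= t -> K (p + t *: v).
Proof.
split=> [[_ [x [evx Kx]]] t t_ge0 | Kray].
  by rewrite -(evolution_cst_line evx _ t_ge0); exact: Kx.
split; first by have := Kray 0 (lexx 0); rewrite scale0r addr0.
by exists (fun t => p + t *: v); split; [exact: evolution_cst | exact: Kray].
Qed.

End constant_dynamics.

Lemma closed_coord_le {R : realType} {k l : nat} (i : 'I_k) (j : 'I_l) (a : R) :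
  closed [set M : 'M[R]_(k, l) | M i j <= a].
Proof.
apply: (@preimage_closed _ _ (fun M : 'M[R]_(k, l) => M i j) [set x | x <= a]).
  by move=> M _; exact: coord_continuous.
exact: closed_le.
Qed.

Definition quadrant_compl (R : realType) : set 'rV[R]_2 :=
  [set p | p ord0 ord_max <= 1] `|` [set p | p ord0 ord0 <= 0].

Lemma closed_quadrant_compl (R : realType) : closed (quadrant_compl R).
Proof. by apply: closedU; exact: closed_coord_le. Qed.

Lemma axis_in_quadrant_compl (R : realType) (i : 'I_2) (t : R) :
  quadrant_compl R (t *: delta_mx ord0 i).
Proof.
by case: i => -[|[|//]] i2; [left | right]; rewrite /= !mxE /= mulr0.
Qed.

Lemma quadrant_compl_corner (R : realType) :
  ~ quadrant_compl R (2 *: delta_mx ord0 ord_max + 1 *: delta_mx ord0 ord0).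
Proof.
rewrite /quadrant_compl /= !mxE /= !(mulr0, mulr1, addr0, add0r).
by case=> /=; apply/negP; rewrite -ltNge ?ltr10 ?ltr1n.
Qed.

Theorem proposition2 (R : realType) :
  exists (N n m : nat) (K : set 'rV[R]_n) (U : 'rV[R]_n -> set 'rV[R]_m)
         (f : 'I_N -> 'rV[R]_n -> 'rV[R]_m -> 'rV[R]_n),
    (2 <= N)%N /\ closed K /\
    (forall i, continuous (fun p : 'rV[R]_n * 'rV[R]_m => f i p.1 p.2)) /\
    let H := [set x | forall i : 'I_N, viab (f i) U K x] in
    H !=set0 /\ exists i : 'I_N, ~ viable (f i) U H.
Proof.
pose U : 'rV[R]_2 -> set 'rV[R]_1 := fun _ => setT.
have U_neq0 y : U y !=set0 by exists 0.
exists 2%N, 2%N, 1%N, (quadrant_compl R), U, (fun i _ _ => delta_mx ord0 i).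
split=> //; split; first exact: closed_quadrant_compl.
split=> [i | H]; first exact: cst_continuous.
have H0 : H 0.
  move=> i; apply/(viab_cstE U_neq0) => t _.
  by rewrite add0r; exact: axis_in_quadrant_compl.
split; first by exists 0.
exists ord_max => viable_H.
have /(_ ord0) := viable_cst_ray viable_H H0 2 (ler0n _ 2).
move/(viab_cstE U_neq0)/(_ 1 ler01).
by rewrite add0r; exact: quadrant_compl_corner.
Qed.
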